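(* If $f\in\mathcal G_0\setminus\{i\}$, then there exist $g_1,g_2\in\mathcal G_0$ such that $$\int_{-1}^1 f(g_1^{-1}(t))\,dt>0>\int_{-1}^1 f(g_2^{-1}(t))\,dt,$$ i.e. $Q(f,g_1)>0>Q(f,g_2)$, so $g_1\to f\to g_2$ in $\Gamma_{\mathcal G}$. If moreover $f\in\mathcal G_0\setminus\mathcal G_{00}$, then $g_1,g_2$ can be chosen in $\mathcal G_{00}$.
   Context: Let $\mathcal G$ be the group (under composition) of strictly increasing continuous maps $f:[-1,1]\to[-1,1]$ with $f(\pm1)=\pm1$; $i\in\mathcal G$ is the identity $i(t)=t$. Let $\mathcal G_0=\{f\in\mathcal G:\int_{-1}^1 f(t)\,dt=0\}$ and $\mathcal G_{00}=\{f\in\mathcal G: f(-t)=-f(t)\ \forall t\}$ (the odd elements; $\mathcal G_{00}\subset\mathcal G_0$). For $f,g\in\mathcal G$ put $Q(f,g)=\int_{-1}^1 f(g^{-1}(t))\,dt$. The digraph $\Gamma_{\mathcal G}$ on $\mathcal G$ has an edge $g\to f$ iff $Q(f,g)>0$. *)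

From Stdlib Require Import Reals ClassicalEpsilon.
From Coquelicot Require Import Coquelicot.
Open Scope R_scope.

Definition I11 (x : R) : Prop := -1 <= x <= 1.

(* f : [-1,1] -> [-1,1] represented as a function R -> R whose values outside
   [-1,1] are irrelevant. *)
Definition inG (f : R -> R) : Prop :=
  (forall x y, I11 x -> I11 y -> x < y -> f x < f y) /\
  (forall x, I11 x -> filterlim f (within I11 (locally x)) (locally (f x))) /\
  f (-1) = -1 /\ f 1 = 1.

Definition inG0 (f : R -> R) : Prop := inG f /\ RInt f (-1) 1 = 0.

Definition inG00 (f : R -> R) : Prop :=
  inG f /\ (forall t, I11 t -> f (- t) = - f t).

Definition is_id (f : R -> R) : Prop := forall t, I11 t -> f t = t.

Definition Ginv (g : R -> R) (y : R) : R :=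
  epsilon (inhabits 0) (fun x => I11 x /\ g x = y).

Definition Q (f g : R -> R) : R := RInt (fun t => f (Ginv g t)) (-1) 1.

(* For g in G the substitution t = g(s) gives Q(f,g) = \int f g'.  Take g piecewise linear
   with nodes -1, -c, 0, c, 1 and slopes r1, r2, r3, r4; then Q(f,g) = sum_i r_i \int_{I_i} f,
   and g(1) = 1 and \int g = 0 are linear conditions on the slopes.
   - If f is not odd, the odd perturbation r1 = r4 = 1 - e c, r2 = r3 = 1 + e (1 - c) gives
     Q(f,g) = e \int_{-c}^c f (using \int f = 0); if this vanished for every c, the integral of
     f(s) + f(-s) over [0,c] would vanish for all c, so f would be odd.
   - If f is odd but not the identity, the skew perturbation
     (r1, r2, r3, r4) = (1 + e c^2, 1 - e (1 - c^2), 1 + e (1 - c^2), 1 - e c^2) keeps \int g = 0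
     and gives Q(f,g) = 2 e ((1 - c^2) \int_0^c f - c^2 \int_c^1 f); if this vanished for every c,
     f(s) - 2 (\int_0^1 f) s would have vanishing integrals over all [0,c], so f(s) = s.
   Taking e = 1/2 and e = -1/2 gives both signs. *)

From Stdlib Require Import Reals Lra Psatz Classical ClassicalEpsilon.
From Coquelicot Require Import Coquelicot.
Open Scope R_scope.

(* Coquelicot states [RInt] equations in the type of its normed module, which [field] and
   [lra] do not recognise as [R]. *)
Ltac R_eq := match goal with |- ?u = ?v => change (u = v :> R) end.

Definition clamp (p q s : R) : R := Rmax p (Rmin q s).

Lemma clamp_lipschitz p q x y : Rabs (clamp p q x - clamp p q y) <= Rabs (x - y).
Proof.
  unfold clamp, Rmax, Rmin. repeat destruct Rle_dec; unfold Rabs; repeat destruct Rcase_abs; lra.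
Qed.

Lemma continuous_clamp p q x : continuous (clamp p q) x.
Proof.
  apply filterlim_locally. intros eps. exists eps. intros y Hy.
  exact (Rle_lt_trans _ _ _ (clamp_lipschitz p q y x) Hy).
Qed.

Lemma clamp_left p q s : p <= q -> s <= p -> clamp p q s = p.
Proof. intros. unfold clamp, Rmax, Rmin. repeat destruct Rle_dec; lra. Qed.

Lemma clamp_right p q s : p <= q -> q <= s -> clamp p q s = q.
Proof. intros. unfold clamp, Rmax, Rmin. repeat destruct Rle_dec; lra. Qed.

Lemma clamp_id p q s : p <= s <= q -> clamp p q s = s.
Proof. intros. unfold clamp, Rmax, Rmin. repeat destruct Rle_dec; lra. Qed.

Lemma clamp_le p q x y : x <= y -> clamp p q x <= clamp p q y.
Proof. intros. unfold clamp, Rmax, Rmin. repeat destruct Rle_dec; lra. Qed.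

Lemma clamp_bounds p q s : p <= q -> p <= clamp p q s <= q.
Proof. intros. unfold clamp, Rmax, Rmin. repeat destruct Rle_dec; lra. Qed.

Ltac simpl_clamp :=
  repeat match goal with
  | |- context [clamp ?p ?q ?s] =>
      first [ rewrite (clamp_left p q s) by lra | rewrite (clamp_right p q s) by lra
            | rewrite (clamp_id p q s) by lra ]
  end.

Lemma continuous_Rplus (f g : R -> R) x :
  continuous f x -> continuous g x -> continuous (fun y => f y + g y) x.
Proof. apply (continuous_plus f g). Qed.

Lemma continuous_Rmult (f g : R -> R) x :
  continuous f x -> continuous g x -> continuous (fun y => f y * g y) x.
Proof. apply (continuous_mult f g). Qed.

Lemma continuous_Rminus (f g : R -> R) x :
  continuous f x -> continuous g x -> continuous (fun y => f y - g y) x.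
Proof. apply (continuous_minus f g). Qed.

Lemma continuous_Ropp (f : R -> R) x : continuous f x -> continuous (fun y => - f y) x.
Proof. apply (continuous_opp f). Qed.

#[local] Hint Resolve continuous_Rplus continuous_Rmult continuous_Rminus continuous_Ropp
  continuous_clamp continuous_id continuous_const : continuity.

Lemma continuous_within (k : R -> R) (D : R -> Prop) x :
  continuous k x -> filterlim k (within D (locally x)) (locally (k x)).
Proof. apply filterlim_filter_le_1, filter_le_within. Qed.

(* [f] is only meaningful on [-1,1]; extending it constantly outside makes it continuous on
   all of [R], which is what Coquelicot's integrability results ask for. *)
Definition extend (f : R -> R) (x : R) : R := f (clamp (-1) 1 x).

Lemma extend_id f x : I11 x -> extend f x = f x.
Proof. intros Hx. unfold extend. rewrite clamp_id; auto. Qed.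

Lemma continuous_extend f : inG f -> forall x, continuous (extend f) x.
Proof.
  intros [_ [Hf _]] x P HP.
  assert (Hin : forall w, I11 (clamp (-1) 1 w)) by (intros; apply clamp_bounds; lra).
  apply (Hf _ (Hin x)) in HP.
  apply (continuous_clamp (-1) 1 x) in HP. unfold filtermap, extend in *.
  apply (filter_imp (fun w => I11 (clamp (-1) 1 w) -> P (f (clamp (-1) 1 w)))); [|exact HP].
  intros w Hw. exact (Hw (Hin w)).
Qed.

Lemma ex_RInt_cont (k : R -> R) a b : (forall x, continuous k x) -> ex_RInt k a b.
Proof. intros Hk. apply (ex_RInt_continuous (V := R_CompleteNormedModule)). auto. Qed.

Lemma RInt_ext_continuous (F G : R -> R) a b : a < b -> (forall x, continuous G x) ->
  (forall x, a < x < b -> F x = G x) -> ex_RInt F a b /\ RInt F a b = RInt G a b.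
Proof.
  intros Hab HG HFG.
  assert (HGF : forall x, Rmin a b < x < Rmax a b -> G x = F x).
  { rewrite Rmin_left, Rmax_right by lra. intros; symmetry; auto. }
  split.
  - exact (ex_RInt_ext G F a b HGF (ex_RInt_cont G a b HG)).
  - symmetry. exact (RInt_ext G F a b HGF).
Qed.

Lemma RInt_Chasles4 (F : R -> R) p0 p1 p2 p3 p4 :
  ex_RInt F p0 p1 -> ex_RInt F p1 p2 -> ex_RInt F p2 p3 -> ex_RInt F p3 p4 ->
  RInt F p0 p4 = RInt F p0 p1 + RInt F p1 p2 + RInt F p2 p3 + RInt F p3 p4.
Proof.
  intros H1 H2 H3 H4.
  assert (H12 := ex_RInt_Chasles _ _ _ _ H1 H2).
  assert (H123 := ex_RInt_Chasles _ _ _ _ H12 H3).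
  rewrite <- (RInt_Chasles F p0 p3 p4), <- (RInt_Chasles F p0 p2 p3), <- (RInt_Chasles F p0 p1 p2)
    by assumption.
  reflexivity.
Qed.

Lemma RInt_affine B r p q :
  RInt (fun s => B + r * (s - p)) p q = (q - p) * (B + (B + r * (q - p))) / 2.
Proof.
  apply is_RInt_unique.
  replace ((q - p) * (B + (B + r * (q - p))) / 2) with
    (minus (B * q + r * (q - p) ^ 2 / 2) (B * p + r * (p - p) ^ 2 / 2))
    by (unfold minus, plus, opp; simpl; field).
  apply (is_RInt_derive (V := R_CompleteNormedModule) (fun s => B * s + r * (s - p) ^ 2 / 2)).
  - intros x _. auto_derive; auto. field.
  - intros x _. auto with continuity.
Qed.

Lemma RInt_comp_affine (k : R -> R) a b b' r : 0 < r -> (forall x, continuous k x) ->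
  RInt (fun t => k (a + (t - b) / r)) b b' = r * RInt k a (a + (b' - b) / r).
Proof.
  intros Hr Hk.
  assert (E := RInt_comp_lin k (/ r) (a - b / r) b b' (ex_RInt_cont _ _ _ Hk)).
  replace (/ r * b + (a - b / r)) with a in E by (field; lra).
  replace (/ r * b' + (a - b / r)) with (a + (b' - b) / r) in E by (field; lra).
  rewrite <- E, <- (RInt_scal (V := R_CompleteNormedModule)).
  - apply RInt_ext. intros x _. unfold scal; simpl; unfold mult; simpl.
    replace (/ r * x + (a - b / r)) with (a + (x - b) / r) by (field; lra). field; lra.
  - apply ex_RInt_cont. intros x. apply (continuous_scal_r (/ r) (fun y => k (/ r * y + (a - b / r)))).
    apply (continuous_comp (fun y => / r * y + (a - b / r)) k); auto with continuity.
Qed.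

Lemma RInt_comp_opp (k : R -> R) a b : (forall x, continuous k x) ->
  RInt (fun y => k (- y)) a b = RInt k (- b) (- a).
Proof.
  intros Hk.
  assert (E := RInt_comp_lin k (-1) 0 a b (ex_RInt_cont _ _ _ Hk)).
  replace (-1 * a + 0) with (- a) in E by ring.
  replace (-1 * b + 0) with (- b) in E by ring.
  rewrite <- (opp_RInt_swap (V := R_CompleteNormedModule) k (- a) (- b)) by (apply ex_RInt_cont, Hk).
  rewrite <- E, <- (RInt_opp (V := R_CompleteNormedModule)).
  - apply RInt_ext. intros x _. unfold opp, scal; simpl; unfold mult; simpl.
    replace (-1 * x + 0) with (- x) by ring. ring.
  - apply ex_RInt_cont. intros x. apply (continuous_scal_r (-1) (fun y => k (-1 * y + 0))).
    apply (continuous_comp (fun y => -1 * y + 0) k); auto with continuity.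
Qed.

Lemma continuous_eq0_closure (k : R -> R) a b : a < b -> (forall x, continuous k x) ->
  (forall x, a < x < b -> k x = 0) -> forall x, a <= x <= b -> k x = 0.
Proof.
  intros Hab Hk H0 x Hx.
  destruct (Req_dec x a) as [->|Ha]; [|destruct (Req_dec x b) as [->|Hb]; [|apply H0; lra]].
  - apply (filterlim_locally_unique (F := at_right a) k).
    + exact (continuous_within _ _ _ (Hk a)).
    + apply (filterlim_ext_loc (fun _ => 0)); [|apply filterlim_const].
      apply (locally_interval _ a m_infty b); simpl; [exact I | exact Hab |].
      intros y _ Hy Hay. symmetry. apply H0. lra.
  - apply (filterlim_locally_unique (F := at_left b) k).
    + exact (continuous_within _ _ _ (Hk b)).
    + apply (filterlim_ext_loc (fun _ => 0)); [|apply filterlim_const].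
      apply (locally_interval _ b a p_infty); simpl; [exact Hab | exact I |].
      intros y Hy _ Hyb. symmetry. apply H0. lra.
Qed.

Lemma RInt_vanishing_eq0 (k : R -> R) : (forall x, continuous k x) ->
  (forall c, 0 < c < 1 -> RInt k 0 c = 0) -> forall s, 0 <= s <= 1 -> k s = 0.
Proof.
  intros Hk H0. apply continuous_eq0_closure; [lra | exact Hk |].
  intros s Hs. rewrite <- (Derive_RInt k 0 s).
  - rewrite (Derive_ext_loc _ (fun _ => 0)) by
      (apply (locally_interval _ s 0 1); simpl; try lra; intros; apply H0; lra).
    apply Derive_const.
  - apply filter_forall. intros; apply ex_RInt_cont, Hk.
  - apply Hk.
Qed.

Lemma Ginv_cancel g x : (forall x y, I11 x -> I11 y -> x < y -> g x < g y) -> I11 x ->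
  Ginv g (g x) = x.
Proof.
  intros Hm Hx. unfold Ginv.
  destruct (epsilon_spec (inhabits 0) (fun z => I11 z /\ g z = g x) (ex_intro _ x (conj Hx eq_refl)))
    as [Hz Hgz].
  set (z := epsilon _ _) in *.
  destruct (Rtotal_order z x) as [L|[L|L]]; auto.
  - specialize (Hm _ _ Hz Hx L). lra.
  - specialize (Hm _ _ Hx Hz L). lra.
Qed.

Lemma RInt_Ginv_affine_piece f g a a' b r : inG f ->
  (forall x y, I11 x -> I11 y -> x < y -> g x < g y) ->
  0 < r -> -1 <= a < a' -> a' <= 1 -> (forall x, a <= x <= a' -> g x = b + r * (x - a)) ->
  ex_RInt (fun t => f (Ginv g t)) b (b + r * (a' - a)) /\
  RInt (fun t => f (Ginv g t)) b (b + r * (a' - a)) = r * RInt (extend f) a a'.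
Proof.
  intros Hf Hm Hr Ha Ha' Hg.
  assert (Hk := continuous_extend f Hf).
  destruct (RInt_ext_continuous (fun t => f (Ginv g t)) (fun t => extend f (a + (t - b) / r))
              b (b + r * (a' - a))) as [Hex HI].
  - nra.
  - intros x. apply (continuous_comp (fun t => a + (t - b) / r) (extend f)); [|apply Hk].
    apply (continuous_ext (fun t => / r * t + (a - b / r))); [intros; simpl; field; lra|].
    auto with continuity.
  - intros t Ht. set (u := (t - b) / r).
    assert (Hu : 0 <= u <= a' - a).
    { unfold u. split; [apply Rdiv_le_0_compat|apply Rle_div_l]; nra. }
    replace t with (g (a + u)) at 1 by (rewrite Hg by lra; unfold u; field; lra).
    rewrite Ginv_cancel, extend_id; auto; unfold I11; lra.
  - split; [exact Hex|]. rewrite HI, RInt_comp_affine by assumption.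
    replace (a + (b + r * (a' - a) - b) / r) with a' by (field; lra). reflexivity.
Qed.

Lemma RInt_affine_piece g a a' b r : a < a' -> (forall x, a <= x <= a' -> g x = b + r * (x - a)) ->
  ex_RInt g a a' /\ RInt g a a' = (a' - a) * (b + (b + r * (a' - a))) / 2.
Proof.
  intros Ha Hg.
  destruct (RInt_ext_continuous g (fun s => b + r * (s - a)) a a') as [Hex HI];
    auto with continuity.
  - intros; apply Hg; lra.
  - rewrite HI, RInt_affine. auto.
Qed.

(* The piecewise linear map through (-1,-1) with slopes r1, r2, r3, r4 on [-1,-c], [-c,0],
   [0,c], [c,1]: each clamp measures how much of a piece lies to the left of s. *)
Definition broken_line c r1 r2 r3 r4 (s : R) : R :=
  -1 + r1 * (clamp (-1) (-c) s + 1) + r2 * (clamp (-c) 0 s + c)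
     + r3 * clamp 0 c s + r4 * (clamp c 1 s - c).

Section BrokenLine.
Variables c r1 r2 r3 r4 : R.
Hypothesis Hc : 0 < c < 1.
Hypotheses (Hr1 : 0 < r1) (Hr2 : 0 < r2) (Hr3 : 0 < r3) (Hr4 : 0 < r4).
Hypothesis Hend : (1 - c) * (r1 + r4) + c * (r2 + r3) = 2.

Let g := broken_line c r1 r2 r3 r4.
Let b1 := -1 + r1 * (1 - c).
Let b2 := b1 + r2 * c.
Let b3 := b2 + r3 * c.

Lemma broken_line_piece1 s : -1 <= s <= -c -> g s = -1 + r1 * (s - -1).
Proof. intros. unfold g, broken_line. simpl_clamp. lra. Qed.

Lemma broken_line_piece2 s : -c <= s <= 0 -> g s = b1 + r2 * (s - - c).
Proof. intros. unfold g, broken_line, b1. simpl_clamp. lra. Qed.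

Lemma broken_line_piece3 s : 0 <= s <= c -> g s = b2 + r3 * (s - 0).
Proof. intros. unfold g, broken_line, b2, b1. simpl_clamp. lra. Qed.

Lemma broken_line_piece4 s : c <= s <= 1 -> g s = b3 + r4 * (s - c).
Proof. intros. unfold g, broken_line, b3, b2, b1. simpl_clamp. lra. Qed.

Lemma broken_line_end : b3 + r4 * (1 - c) = 1.
Proof. unfold b3, b2, b1. lra. Qed.

Lemma broken_line_incr x y : I11 x -> I11 y -> x < y -> g x < g y.
Proof.
  unfold I11. intros Hx Hy Hxy. unfold g, broken_line.
  assert (Hsum : forall s, -1 <= s <= 1 ->
    (clamp (-1) (-c) s + 1) + (clamp (-c) 0 s + c) + clamp 0 c s + (clamp c 1 s - c) = s + 1).
  { intros s Hs.
    destruct (Rle_dec s (-c)); [|destruct (Rle_dec s 0); [|destruct (Rle_dec s c)]];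
      simpl_clamp; lra. }
  assert (Sx := Hsum x Hx). assert (Sy := Hsum y Hy).
  assert (M1 := clamp_le (-1) (-c) x y ltac:(lra)).
  assert (M2 := clamp_le (-c) 0 x y ltac:(lra)).
  assert (M3 := clamp_le 0 c x y ltac:(lra)).
  assert (M4 := clamp_le c 1 x y ltac:(lra)).
  set (m := Rmin (Rmin r1 r2) (Rmin r3 r4)).
  assert (Hm : 0 < m /\ m <= r1 /\ m <= r2 /\ m <= r3 /\ m <= r4).
  { unfold m, Rmin. repeat destruct Rle_dec; lra. }
  nra.
Qed.

Lemma broken_line_inG : inG g.
Proof.
  split; [exact broken_line_incr|]. split; [|split].
  - intros x _. apply continuous_within. unfold g, broken_line. auto 10 with continuity.
  - rewrite broken_line_piece1 by lra. lra.
  - rewrite broken_line_piece4 by lra. apply broken_line_end.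
Qed.

Lemma broken_line_Q f : inG f ->
  Q f g = r1 * RInt (extend f) (-1) (-c) + r2 * RInt (extend f) (-c) 0
        + r3 * RInt (extend f) 0 c + r4 * RInt (extend f) c 1.
Proof.
  intros Hf.
  destruct (RInt_Ginv_affine_piece f g (-1) (-c) (-1) r1 Hf broken_line_incr Hr1
              ltac:(lra) ltac:(lra) broken_line_piece1) as [E1 I1].
  destruct (RInt_Ginv_affine_piece f g (-c) 0 b1 r2 Hf broken_line_incr Hr2
              ltac:(lra) ltac:(lra) broken_line_piece2) as [E2 I2].
  destruct (RInt_Ginv_affine_piece f g 0 c b2 r3 Hf broken_line_incr Hr3
              ltac:(lra) ltac:(lra) broken_line_piece3) as [E3 I3].
  destruct (RInt_Ginv_affine_piece f g c 1 b3 r4 Hf broken_line_incr Hr4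
              ltac:(lra) ltac:(lra) broken_line_piece4) as [E4 I4].
  replace (-1 + r1 * (-c - -1)) with b1 in E1, I1 by (unfold b1; ring).
  replace (b1 + r2 * (0 - - c)) with b2 in E2, I2 by (unfold b2; ring).
  replace (b2 + r3 * (c - 0)) with b3 in E3, I3 by (unfold b3; ring).
  rewrite broken_line_end in E4, I4.
  unfold Q. rewrite (RInt_Chasles4 _ (-1) b1 b2 b3 1) by assumption. lra.
Qed.

Lemma broken_line_RInt : RInt g (-1) 1 =
  ((1 - c) * (-1 + b1) + c * (b1 + b2) + c * (b2 + b3) + (1 - c) * (b3 + 1)) / 2.
Proof.
  destruct (RInt_affine_piece g (-1) (-c) (-1) r1 ltac:(lra) broken_line_piece1) as [E1 I1].
  destruct (RInt_affine_piece g (-c) 0 b1 r2 ltac:(lra) broken_line_piece2) as [E2 I2].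
  destruct (RInt_affine_piece g 0 c b2 r3 ltac:(lra) broken_line_piece3) as [E3 I3].
  destruct (RInt_affine_piece g c 1 b3 r4 ltac:(lra) broken_line_piece4) as [E4 I4].
  rewrite (RInt_Chasles4 _ (-1) (-c) 0 c 1), I1, I2, I3, I4 by assumption.
  rewrite broken_line_end. R_eq. unfold b3, b2, b1. field.
Qed.

Lemma broken_line_odd : r1 = r4 -> r2 = r3 -> forall t, I11 t -> g (- t) = - g t.
Proof.
  unfold I11. intros E1 E2 t Ht. rewrite <- E1, <- E2 in Hend.
  destruct (Rle_dec t (-c)); [|destruct (Rle_dec t 0); [|destruct (Rle_dec t c)]].
  - rewrite (broken_line_piece1 t), (broken_line_piece4 (- t)) by lra.
    unfold b3, b2, b1. rewrite <- E1, <- E2. lra.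
  - rewrite (broken_line_piece2 t), (broken_line_piece3 (- t)) by lra.
    unfold b2, b1. rewrite <- E2. lra.
  - rewrite (broken_line_piece3 t), (broken_line_piece2 (- t)) by lra.
    unfold b2, b1. rewrite <- E2. lra.
  - rewrite (broken_line_piece4 t), (broken_line_piece1 (- t)) by lra.
    unfold b3, b2, b1. rewrite <- E1, <- E2. lra.
Qed.

End BrokenLine.

Lemma RInt_extend f a b : -1 <= a -> a <= b -> b <= 1 -> RInt (extend f) a b = RInt f a b.
Proof.
  intros. apply RInt_ext. rewrite Rmin_left, Rmax_right by lra.
  intros x Hx. apply extend_id. unfold I11; lra.
Qed.

Lemma RInt_extend_odd f a b : inG f -> (forall t, I11 t -> f (- t) = - f t) ->
  -1 <= a -> a <= b -> b <= 1 -> RInt (extend f) (- b) (- a) = - RInt (extend f) a b.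
Proof.
  intros Hf Hodd Ha Hab Hb. assert (Hk := continuous_extend f Hf).
  rewrite <- RInt_comp_opp by exact Hk.
  rewrite (RInt_ext _ (fun y => opp (extend f y))).
  - apply (RInt_opp (V := R_CompleteNormedModule)), ex_RInt_cont, Hk.
  - rewrite Rmin_left, Rmax_right by lra. intros x Hx.
    rewrite !extend_id by (unfold I11; lra). apply Hodd. unfold I11; lra.
Qed.

Lemma inG00_inG0 f : inG00 f -> inG0 f.
Proof.
  intros [Hf Hodd]. split; [exact Hf|]. assert (Hk := continuous_extend f Hf).
  rewrite <- RInt_extend by lra.
  rewrite <- (RInt_Chasles (extend f) (-1) 0 1) by apply ex_RInt_cont, Hk.
  assert (E := RInt_extend_odd f 0 1 Hf Hodd ltac:(lra) ltac:(lra) ltac:(lra)).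
  rewrite Ropp_0 in E. replace (- (1)) with (-1) in E by ring. rewrite E. unfold plus; simpl. ring.
Qed.

Definition odd_bend c e :=
  broken_line c (1 - e * c) (1 + e * (1 - c)) (1 + e * (1 - c)) (1 - e * c).

Definition skew_bend c e :=
  broken_line c (1 + e * c ^ 2) (1 - e * (1 - c ^ 2)) (1 + e * (1 - c ^ 2)) (1 - e * c ^ 2).

Lemma odd_bend_inG00 c e : 0 < c < 1 -> -1/2 <= e <= 1/2 -> inG00 (odd_bend c e).
Proof.
  intros Hc He. split; [apply broken_line_inG | apply broken_line_odd]; auto; nra.
Qed.

Lemma Q_odd_bend f c e : inG0 f -> 0 < c < 1 -> -1/2 <= e <= 1/2 ->
  Q f (odd_bend c e) = e * RInt f (-c) c.
Proof.
  intros [Hf Hint] Hc He. assert (Hex := fun a b => ex_RInt_cont _ a b (continuous_extend f Hf)).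
  unfold odd_bend. rewrite broken_line_Q by (auto; nra).
  assert (Htotal := RInt_Chasles4 (extend f) (-1) (-c) 0 c 1 (Hex _ _) (Hex _ _) (Hex _ _) (Hex _ _)).
  rewrite RInt_extend, Hint in Htotal by lra.
  rewrite <- (RInt_extend f (-c) c), <- (RInt_Chasles (extend f) (-c) 0 c) by (auto; lra).
  replace (RInt (extend f) (-1) (-c)) with
    (- (RInt (extend f) (-c) 0 + RInt (extend f) 0 c + RInt (extend f) c 1)) by lra.
  unfold plus; simpl. ring.
Qed.

Lemma skew_bend_inG0 c e : 0 < c < 1 -> -1/2 <= e <= 1/2 -> inG0 (skew_bend c e).
Proof.
  intros Hc He. assert (0 < c ^ 2 < 1) by nra.
  split; [apply broken_line_inG; auto; nra|].
  unfold skew_bend. rewrite broken_line_RInt by (auto; nra). R_eq. field.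
Qed.

Lemma Q_skew_bend f c e : inG f -> (forall t, I11 t -> f (- t) = - f t) ->
  0 < c < 1 -> -1/2 <= e <= 1/2 ->
  Q f (skew_bend c e) = e * (2 * ((1 - c ^ 2) * RInt f 0 c - c ^ 2 * RInt f c 1)).
Proof.
  intros Hf Hodd Hc He. assert (0 < c ^ 2 < 1) by nra.
  unfold skew_bend. rewrite broken_line_Q by (auto; nra).
  assert (E1 := RInt_extend_odd f c 1 Hf Hodd ltac:(lra) ltac:(lra) ltac:(lra)).
  assert (E2 := RInt_extend_odd f 0 c Hf Hodd ltac:(lra) ltac:(lra) ltac:(lra)).
  replace (- (1)) with (-1) in E1 by ring. rewrite Ropp_0 in E2.
  rewrite E1, E2, !RInt_extend by lra. ring.
Qed.

Lemma not_odd_witness f : inG f -> ~ inG00 f -> exists c, 0 < c < 1 /\ RInt f (-c) c <> 0.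
Proof.
  intros Hf Hno. apply NNPP. intros Hall. apply Hno. split; [exact Hf|].
  assert (Hk := continuous_extend f Hf).
  assert (Hk' : forall x, continuous (fun s => extend f (- s)) x).
  { intros x. apply (continuous_comp (fun s => - s) (extend f)); auto with continuity. }
  assert (Hsym : forall s, 0 <= s <= 1 -> extend f s + extend f (- s) = 0).
  { apply RInt_vanishing_eq0; [auto with continuity|]. intros c Hc.
    rewrite (RInt_plus (V := R_CompleteNormedModule) (extend f) (fun s => extend f (- s)))
      by (apply ex_RInt_cont; auto).
    rewrite RInt_comp_opp, Ropp_0 by exact Hk.
    replace (plus (RInt (extend f) 0 c) (RInt (extend f) (-c) 0)) with (RInt f (-c) c).
    - apply NNPP. intros Hc0. apply Hall. exists c. auto.
    - rewrite <- (RInt_extend f (-c) c), <- (RInt_Chasles (extend f) (-c) 0 c)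
        by (try apply ex_RInt_cont; auto; lra).
      apply Rplus_comm. }
  unfold I11. intros t Ht. destruct (Rle_dec 0 t).
  - specialize (Hsym t ltac:(lra)). rewrite !extend_id in Hsym by (unfold I11; lra). lra.
  - specialize (Hsym (- t) ltac:(lra)). rewrite Ropp_involutive in Hsym.
    rewrite !extend_id in Hsym by (unfold I11; lra). lra.
Qed.

Lemma not_id_witness f : inG f -> (forall t, I11 t -> f (- t) = - f t) -> ~ is_id f ->
  exists c, 0 < c < 1 /\ (1 - c ^ 2) * RInt f 0 c - c ^ 2 * RInt f c 1 <> 0.
Proof.
  intros Hf Hodd Hnid. apply NNPP. intros Hall. apply Hnid.
  assert (Hk := continuous_extend f Hf).
  remember (2 * RInt f 0 1) as m eqn:Hm_def.
  (* [f s - m s], with the linear part in the shape of [RInt_affine]. *)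
  assert (Hlin : forall s, 0 <= s <= 1 -> extend f s + (0 + - m * (s - 0)) = 0).
  { apply RInt_vanishing_eq0; [auto with continuity|]. intros c Hc.
    rewrite (RInt_plus (V := R_CompleteNormedModule) (extend f) (fun s => 0 + - m * (s - 0)))
      by (apply ex_RInt_cont; auto with continuity).
    rewrite RInt_affine, RInt_extend by lra.
    assert (Hsplit : RInt f 0 1 = RInt f 0 c + RInt f c 1).
    { rewrite <- (RInt_extend f 0 1), <- (RInt_extend f 0 c), <- (RInt_extend f c 1) by lra.
      symmetry. apply (RInt_Chasles (V := R_CompleteNormedModule)); apply ex_RInt_cont, Hk. }
    assert (Hc0 : (1 - c ^ 2) * RInt f 0 c - c ^ 2 * RInt f c 1 = 0).
    { apply NNPP. intros Hc0. apply Hall. exists c. auto. }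
    rewrite Hm_def, Hsplit. R_eq. unfold plus; simpl. nra. }
  assert (Hm : m = 1).
  { specialize (Hlin 1 ltac:(lra)). rewrite extend_id in Hlin by (unfold I11; lra).
    destruct Hf as (_ & _ & _ & Hf1). lra. }
  intros t Ht. unfold I11 in Ht. destruct (Rle_dec 0 t).
  - specialize (Hlin t ltac:(lra)). rewrite extend_id, Hm in Hlin by (unfold I11; lra). lra.
  - specialize (Hlin (- t) ltac:(lra)). rewrite extend_id, Hodd, Hm in Hlin by (unfold I11; lra).
    lra.
Qed.

Lemma opposite_signs (P : (R -> R) -> Prop) (q : (R -> R) -> R) (h : R -> R -> R) K :
  K <> 0 -> (forall e, -1/2 <= e <= 1/2 -> P (h e) /\ q (h e) = e * K) ->
  exists g1 g2, P g1 /\ P g2 /\ q g1 > 0 /\ 0 > q g2.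
Proof.
  intros HK Hh.
  destruct (Hh (1/2) ltac:(lra)) as [Hp Qp]. destruct (Hh (-1/2) ltac:(lra)) as [Hn Qn].
  destruct (Rlt_dec 0 K).
  - exists (h (1/2)), (h (-1/2)). rewrite Qp, Qn. repeat split; auto; lra.
  - exists (h (-1/2)), (h (1/2)). rewrite Qp, Qn. repeat split; auto; lra.
Qed.

Theorem theorem4p2 (f : R -> R) :
  inG0 f -> ~ is_id f ->
  (exists g1 g2, inG0 g1 /\ inG0 g2 /\ Q f g1 > 0 /\ 0 > Q f g2) /\
  (~ inG00 f ->
   exists g1 g2, inG00 g1 /\ inG00 g2 /\ Q f g1 > 0 /\ 0 > Q f g2).
Proof.
  intros Hf0 Hnid. pose proof (proj1 Hf0) as Hf.
  assert (Hnot_odd : ~ inG00 f ->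
    exists g1 g2, inG00 g1 /\ inG00 g2 /\ Q f g1 > 0 /\ 0 > Q f g2).
  { intros Hno. destruct (not_odd_witness f Hf Hno) as (c & Hc & HK).
    apply (opposite_signs inG00 (Q f) (odd_bend c) _ HK).
    intros e He. split; [apply odd_bend_inG00 | apply Q_odd_bend]; auto. }
  split; [|exact Hnot_odd].
  destruct (classic (inG00 f)) as [[_ Hodd] | Hno].
  - destruct (not_id_witness f Hf Hodd Hnid) as (c & Hc & HK).
    apply (opposite_signs inG0 (Q f) (skew_bend c)
             (2 * ((1 - c ^ 2) * RInt f 0 c - c ^ 2 * RInt f c 1))); [lra|].
    intros e He. split; [apply skew_bend_inG0 | apply Q_skew_bend]; auto.
  - destruct (Hnot_odd Hno) as (g1 & g2 & H1 & H2 & HQ).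
    exists g1, g2. auto using inG00_inG0.
Qed.
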